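(* Let $V_1,V_2$ be irreducible $R$-modules having the same infinitesimal character (i.e., there is an algebra homomorphism $\xi:Z(R)\to\mathbb{C}$ such that each $z\in Z(R)$ acts on both $V_1$ and $V_2$ by the scalar $\xi(z)$). If $V_1$ and $V_2$ each contain a nonzero Whittaker vector of type $\eta$, then in each $V_i$ the Whittaker vectors of type $\eta$ are unique up to scalar multiples, and $V_1\cong V_2$ as $R$-modules.
   Context: Let $f\in\mathbb{C}[H]$ be a polynomial. $R=R(f)$ is the associative $\mathbb{C}$-algebra generated by $E,F,H$ with relations $EF-FE=f(H)$, $HE-EH=E$, $HF-FH=-F$. Let $R(E)=\mathbb{C}[E]$; $Z(R)$ is the center of $R$. Fix an algebra homomorphism $\eta:R(E)\to\mathbb{C}$ with $\eta(E)\neq 0$. A vector $w$ of an $R$-module is a Whittaker vector of type $\eta$ if $Ew=\eta(E)w$. *)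

(* C := R[i] for R : realType, i.e. the complex numbers. *)
From HB Require Import structures.
From mathcomp Require Import all_boot all_order all_algebra.
From mathcomp Require Import complex.
From mathcomp Require Import reals.
Set Implicit Arguments. Unset Strict Implicit. Unset Printing Implicit Defensive.
Import Order.TTheory GRing.Theory Num.Theory.
Local Open Scope ring_scope.

Section Defs.
Variable C : fieldType.

Definition peval (V : lmodType C) (f : {poly C}) (H : V -> V) (v : V) : V :=
  \sum_(i < size f) f`_i *: iter i H v.

Definition is_Rmodule (f : {poly C}) (V : lmodType C)
    (E F H : {linear V -> V}) : Prop :=
  [/\ forall v, E (F v) - F (E v) = peval f H v,
      forall v, H (E v) - E (H v) = E v &
      forall v, H (F v) - F (H v) = - F v].

(* Elements of the algebra R(f), written as noncommutative polynomial
   expressions in the generators E, F, H with coefficients in C. *)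
Inductive Rterm : Type :=
  | tE | tF | tH
  | tC of C
  | tAdd of Rterm & Rterm
  | tMul of Rterm & Rterm.

Fixpoint act (V : lmodType C) (E F H : V -> V) (t : Rterm) (v : V) : V :=
  match t with
  | tE => E v | tF => F v | tH => H v
  | tC c => c *: v
  | tAdd a b => act E F H a v + act E F H b v
  | tMul a b => act E F H a (act E F H b v)
  end.

(* Since R acts faithfully on itself, this is expressed as: in every
   R(f)-module, the action of z commutes with those of E, F, H. *)
Definition central (f : {poly C}) (z : Rterm) : Prop :=
  forall (V : lmodType C) (E F H : {linear V -> V}), is_Rmodule f E F H ->
    forall v, act E F H z (E v) = E (act E F H z v) /\
              act E F H z (F v) = F (act E F H z v) /\
              act E F H z (H v) = H (act E F H z v).

Definition center_char (f : {poly C}) (xi : Rterm -> C) : Prop :=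
  (forall c, xi (tC c) = c) /\
  (forall a b, central f a -> central f b -> xi (tAdd a b) = xi a + xi b) /\
  (forall a b, central f a -> central f b -> xi (tMul a b) = xi a * xi b).

Definition irreducible (V : lmodType C) (E F H : V -> V) : Prop :=
  (exists v : V, v != 0) /\
  forall S : V -> Prop,
    S 0 -> (forall u w, S u -> S w -> S (u + w)) ->
    (forall (c : C) u, S u -> S (c *: u)) ->
    (forall u, S u -> S (E u) /\ S (F u) /\ S (H u)) ->
    (forall u, S u -> u = 0) \/ (forall u, S u).

(* w is a Whittaker vector of type eta, where eta : C[E] -> C is
   determined by the scalar etaE = eta(E) *)
Definition whittaker (V : lmodType C) (E : V -> V) (etaE : C) (w : V) :=
  E w = etaE *: w.

Definition Rmod_iso (V1 V2 : lmodType C) (E1 F1 H1 : V1 -> V1)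
    (E2 F2 H2 : V2 -> V2) : Prop :=
  exists phi : {linear V1 -> V2}, bijective phi /\
    forall v, phi (E1 v) = E2 (phi v) /\ phi (F1 v) = F2 (phi v) /\
              phi (H1 v) = H2 (phi v).
End Defs.

From HB Require Import structures.
From mathcomp Require Import all_boot all_order all_algebra.
From mathcomp Require Import complex.
From mathcomp Require Import reals.
Import Order.TTheory GRing.Theory Num.Theory.
Local Open Scope ring_scope.
Set Implicit Arguments. Unset Strict Implicit.

(* The Casimir element FE + u(H), where u(H) - u(H - 1) = f(H), is central, so
   it acts on an irreducible module V by a scalar xi.  For a Whittaker vector
   w this gives F w = eta^-1 (xi - u(H)) w, and E p(H) w = eta p(H - 1) w, so
   the vectors p(H) w form a submodule, hence all of V.  They are moreover
   independent: applying E to a relation p(H) w = 0 yields the relation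
   (p(H) - p(H - 1)) w = 0 of lower degree, and in characteristic zero only
   constant polynomials are invariant under X -> X - 1.  Hence p |-> p(H) w
   identifies V with C[X], on which E, F and H act by formulas depending only
   on eta and xi.  This gives the isomorphism, and the Whittaker vectors
   correspond to the shift-invariant, i.e. constant, polynomials. *)

Section PolyEval.
Variables (C : fieldType) (V : lmodType C) (H : {linear V -> V}).
Implicit Types (p q : {poly C}) (v : V).

Lemma peval_widen p n v : (size p <= n)%N ->
  peval p H v = \sum_(i < n) p`_i *: iter i H v.
Proof.
move=> le_p_n; rewrite /peval -(subnKC le_p_n) big_split_ord /=.
rewrite [X in _ + X]big1 ?addr0 // => i _.
by rewrite nth_default ?scale0r // leq_addr.
Qed.

Lemma peval0 v : peval 0 H v = 0.
Proof. by rewrite /peval size_poly0 big_ord0. Qed.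

Lemma pevalD p q v : peval (p + q) H v = peval p H v + peval q H v.
Proof.
pose n := (size p + size q)%N.
have le_pq : (size (p + q)%R <= n)%N.
  by rewrite (leq_trans (size_add _ _)) // geq_max leq_addr leq_addl.
rewrite (peval_widen _ le_pq) (@peval_widen p n) ?leq_addr //.
rewrite (@peval_widen q n) ?leq_addl // -big_split /=.
by apply: eq_bigr => i _; rewrite coefD scalerDl.
Qed.

Lemma pevalZ c p v : peval (c *: p) H v = c *: peval p H v.
Proof.
rewrite (@peval_widen _ (size p)) ?size_scale_leq // scaler_sumr.
by apply: eq_bigr => i _; rewrite coefZ scalerA.
Qed.

Lemma pevalB p q v : peval (p - q) H v = peval p H v - peval q H v.
Proof. by rewrite pevalD -[- q]scaleN1r pevalZ scaleN1r. Qed.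

Lemma pevalC c v : peval c%:P H v = c *: v.
Proof. by rewrite (@peval_widen _ 1) ?size_polyC ?leq_b1 // big_ord1 coefC. Qed.

Lemma pevalMX p v : peval (p * 'X) H v = peval p H (H v).
Proof.
have le_pX : (size (p * 'X)%R <= (size p).+1)%N.
  by rewrite (leq_trans (size_mul_leq _ _)) // size_polyX addn2.
rewrite (peval_widen _ le_pX) big_ord_recl coefMX eqxx scale0r add0r.
by apply: eq_bigr => i _; rewrite lift0 coefMX iterSr.
Qed.

Lemma pevalX v : peval 'X H v = H v.
Proof. by rewrite -['X]mul1r pevalMX pevalC scale1r. Qed.

Lemma peval_comm p v : peval p H (H v) = H (peval p H v).
Proof.
rewrite /peval linear_sum; apply: eq_bigr => i _.
by rewrite linearZ /= -iterS iterSr.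
Qed.

Lemma pevalvZ p c v : peval p H (c *: v) = c *: peval p H v.
Proof.
rewrite /peval scaler_sumr; apply: eq_bigr => i _.
have iterZ j : iter j H (c *: v) = c *: iter j H v.
  by elim: j => //= j ->; rewrite linearZ.
by rewrite iterZ !scalerA mulrC.
Qed.

Lemma pevalM p q v : peval (p * q) H v = peval p H (peval q H v).
Proof.
elim/poly_ind: p v => [|p c IHp] v; first by rewrite mul0r !peval0.
rewrite mulrDl -mulrA (mulrC 'X) mulrA mul_polyC.
by rewrite !pevalD !pevalMX IHp pevalZ pevalC peval_comm.
Qed.

Lemma peval_shift (A : {linear V -> V}) (a : C) :
  (forall v, A (H v) = H (A v) + a *: A v) ->
  forall p v, A (peval p H v) = peval (p \Po ('X + a%:P)) H (A v).
Proof.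
move=> AH; elim/poly_ind => [|p c IHp] v; first by rewrite comp_poly0 !peval0 linear0.
rewrite pevalD pevalMX pevalC linearD linearZ IHp AH.
rewrite comp_polyD comp_polyM comp_polyX comp_polyC.
by rewrite pevalD pevalC pevalM pevalD pevalC pevalX.
Qed.

End PolyEval.

Section Difference.
Variable C : fieldType.
Implicit Types (a : C) (p : {poly C}).

Definition delta a p : {poly C} := p - (p \Po ('X + a%:P)).

Fact delta_is_linear a : linear (delta a).
Proof. by move=> c p q; rewrite /delta comp_polyD comp_polyZ scalerBr addrACA opprD. Qed.

HB.instance Definition _ a :=
  GRing.isLinear.Build C {poly C} {poly C} _ (delta a) (delta_is_linear a).

Lemma size_delta a p : (size (delta a p) <= (size p).-1)%N.
Proof.
have [->|p0] := eqVneq p 0; first by rewrite linear0 size_poly0.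
have size_shift := size_comp_poly2 p (size_XaddC a).
have lead_shift : lead_coef (p \Po ('X + a%:P)) = lead_coef p.
  by rewrite lead_coef_comp ?size_XaddC // lead_coefXaddC expr1n mulr1.
apply/leq_sizeP => j le_j; rewrite coefB.
have [->|ne_j] := eqVneq j (size p).-1.
  by move: lead_shift; rewrite /lead_coef size_shift => ->; rewrite subrr.
have lt_j : (size p <= j)%N.
  by rewrite -(prednK (_ : 0 < size p)%N) ?size_poly_gt0 // ltn_neqAle eq_sym ne_j.
by rewrite !nth_default ?subrr ?size_shift.
Qed.

Fixpoint rising k : {poly C} :=
  if k is k'.+1 then ('X + k%:R%:P) * rising k' else 1.

Lemma monic_rising k : rising k \is monic.
Proof. by elim: k => [|k IHk] /=; rewrite ?monic1 // monicMl ?monicXaddC. Qed.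

Lemma size_rising k : size (rising k) = k.+1.
Proof.
elim: k => [|k IHk] /=; first by rewrite size_poly1.
by rewrite size_monicM ?monicXaddC ?size_XaddC ?IHk // -size_poly_eq0 IHk.
Qed.

Lemma rising_shift k : rising k.+1 \Po ('X + (-1)%:P) = 'X * rising k.
Proof.
elim: k => [|k IHk].
  by rewrite /= !mulr1 comp_polyD comp_polyX comp_polyC -addrA -polyCD addNr addr0.
rewrite [rising k.+2]/= comp_polyM IHk comp_polyD comp_polyX comp_polyC.
rewrite -addrA -polyCD [rising k.+1]/= mulrCA.
by rewrite [k.+2%:R]mulrS addKr.
Qed.

Lemma delta_rising k : delta (-1) (rising k.+1) = k.+1%:R *: rising k.
Proof. by rewrite /delta rising_shift [rising k.+1]/= mulrDl addrAC subrr add0r mul_polyC. Qed.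

Hypothesis C_char0 : [pchar C] =i pred0.

Lemma pchar0_natr_inj : injective (GRing.natmul (1 : C)).
Proof.
have natr_eq0 := (pcharf0P C).1 C_char0.
suff le_inj m n : (m <= n)%N -> m%:R = n%:R :> C -> m = n.
  by move=> m n; case: (leqP m n) => [/le_inj//|/ltnW/le_inj h /esym/h].
move=> /subnKC <-; rewrite natrD -{1}(addr0 m%:R) => /addrI/esym/eqP.
by rewrite natr_eq0 => /eqP->; rewrite addn0.
Qed.

Lemma delta_eq0 a p : a != 0 -> delta a p = 0 -> (size p <= 1)%N.
Proof.
move=> a0 /eqP; rewrite subr_eq0 => /eqP p_shift.
have p_const k : p.[k%:R * a] = p.[0].
  elim: k => [|k IHk]; first by rewrite mul0r.
  by rewrite -IHk {2}p_shift horner_comp !hornerE mulrSr mulrDl mul1r.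
rewrite leqNgt; apply/negP => size_p.
pose q := p - p.[0]%:P.
have q0 : q != 0.
  apply: contraTneq size_p => /eqP; rewrite subr_eq0 => /eqP ->.
  by rewrite size_polyC -leqNgt leq_b1.
suff : (size (mkseq (fun k => (k%:R * a)%R) (size q)) < size q)%N.
  by rewrite size_mkseq ltnn.
apply: (max_poly_roots q0).
  by apply/allP => _ /mapP [k _ ->]; rewrite /root !hornerE p_const subrr.
by rewrite map_inj_uniq ?iota_uniq // => m n /(mulIf a0)/pchar0_natr_inj.
Qed.

Lemma delta_surj f : exists u, delta (-1) u = f.
Proof.
have natr_eq0 := (pcharf0P C).1 C_char0.
elim: {f}(size f) {-2}f (leqnn (size f)) => [|n IHn] f le_f.
  by exists 0; move: le_f; rewrite leqn0 size_poly_eq0 => /eqP ->; rewrite linear0.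
have [/IHn//|_] := leqP (size f) n.
pose c := f`_n.
have size_f : (size (f - c *: rising n)%R <= n)%N.
  apply/leq_sizeP => j le_j; rewrite coefB coefZ.
  have [->|ne_j] := eqVneq j n.
    move: (monic_rising n); rewrite monicE /lead_coef size_rising => /eqP ->.
    by rewrite mulr1 subrr.
  have lt_j : (n < j)%N by rewrite ltn_neqAle eq_sym ne_j.
  by rewrite !nth_default ?mulr0 ?subrr ?size_rising // (leq_trans le_f).
have [u delta_u] := IHn _ size_f.
exists (u + (c / n.+1%:R) *: rising n.+1).
by rewrite linearD linearZ /= delta_rising delta_u scalerA mulfVK ?natr_eq0 ?subrK.
Qed.

End Difference.

Section Relations.
Variables (C : fieldType) (f : {poly C}) (V : lmodType C).
Variables (E F H : {linear V -> V}).
Hypothesis RmodV : is_Rmodule f E F H.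

Lemma EH_shift v : E (H v) = H (E v) + (-1) *: E v.
Proof. by case: RmodV => _ HE _; rewrite scaleN1r -{2}(HE v) opprB addrC subrK. Qed.

Lemma FH_shift v : F (H v) = H (F v) + 1 *: F v.
Proof. by case: RmodV => _ _ HF; rewrite scale1r -{2}[F v]opprK -(HF v) opprB addrC subrK. Qed.

Lemma EF_comm v : E (F v) = F (E v) + peval f H v.
Proof. by case: RmodV => EF _ _; rewrite -(EF v) addrC subrK. Qed.

Lemma E_peval p v : E (peval p H v) = peval (p \Po ('X + (-1)%:P)) H (E v).
Proof. exact: peval_shift EH_shift p v. Qed.

Lemma F_peval p v : F (peval p H v) = peval (p \Po ('X + 1%:P)) H (F v).
Proof. exact: peval_shift FH_shift p v. Qed.

End Relations.

Section Casimir.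
Variable C : fieldType.

Fixpoint horner_term (s : seq C) : Rterm C :=
  if s is c :: s' then tAdd (tC c) (tMul (horner_term s') (tH C)) else tC 0.

Lemma act_horner_term (V : lmodType C) (E F H : V -> V) (p : {poly C}) v :
  act E F H (horner_term p) v = peval p H v.
Proof.
rewrite /peval; elim: (polyseq p) v => [|c s IHs] v /=; first by rewrite big_ord0 scale0r.
rewrite IHs big_ord_recl; congr (_ + _).
by apply: eq_bigr => i _; rewrite lift0 iterSr.
Qed.

Definition casimir (u : {poly C}) : Rterm C := tAdd (tMul (tF C) (tE C)) (horner_term u).

Lemma act_casimir (V : lmodType C) (E F H : V -> V) u v :
  act E F H (casimir u) v = F (E v) + peval u H v.
Proof. by rewrite /= act_horner_term. Qed.

Lemma casimir_central (f u : {poly C}) : delta (-1) u = f -> central f (casimir u).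
Proof.
move=> delta_u V E F H RmodV v; rewrite !act_casimir; split; [|split].
- rewrite linearD (EF_comm RmodV) (E_peval RmodV) -addrA -pevalD -delta_u.
  by rewrite /delta subrK.
- rewrite !linearD (EF_comm RmodV) linearD !(F_peval RmodV) -!addrA -!pevalD.
  congr (_ + peval _ H _); rewrite -delta_u /delta comp_polyB -comp_polyA.
  rewrite comp_polyD comp_polyX comp_polyC -[_ + 1%:P + _]addrA -polyCD.
  by rewrite addrN addr0 comp_polyXr subrK.
- rewrite linearD -peval_comm; congr (_ + _).
  by rewrite (EH_shift RmodV) linearD linearZ (FH_shift RmodV) /= scaleN1r scale1r addrK.
Qed.

End Casimir.

Definition orbit_map (C : fieldType) (V : lmodType C) (H : {linear V -> V}) (v : V)
  (p : {poly C}) : V := peval p H v.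

Fact orbit_map_is_linear (C : fieldType) (V : lmodType C) (H : {linear V -> V}) v :
  linear (orbit_map H v).
Proof. by move=> c p q; rewrite /orbit_map pevalD pevalZ. Qed.

HB.instance Definition _ (C : fieldType) (V : lmodType C) (H : {linear V -> V}) v :=
  GRing.isLinear.Build C {poly C} V _ (orbit_map H v) (orbit_map_is_linear H v).

Lemma Rmod_iso_transport (C : fieldType) (P V1 V2 : lmodType C)
    (e1 : {linear P -> V1}) (e2 : {linear P -> V2}) (TE TF TH : P -> P)
    (E1 F1 H1 : V1 -> V1) (E2 F2 H2 : V2 -> V2) :
  bijective e1 -> bijective e2 ->
  (forall p, E1 (e1 p) = e1 (TE p)) -> (forall p, E2 (e2 p) = e2 (TE p)) ->
  (forall p, F1 (e1 p) = e1 (TF p)) -> (forall p, F2 (e2 p) = e2 (TF p)) ->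
  (forall p, H1 (e1 p) = e1 (TH p)) -> (forall p, H2 (e2 p) = e2 (TH p)) ->
  Rmod_iso E1 F1 H1 E2 F2 H2.
Proof.
move=> [g1 e1K g1K] [g2 e2K g2K] hE1 hE2 hF1 hF2 hH1 hH2.
pose g1l : {linear V1 -> P} :=
  HB.pack g1 (GRing.isLinear.Build _ _ _ _ g1 (can2_linear e1K g1K)).
exists (e2 \o g1l : {linear V1 -> V2}); split.
  by exists (e1 \o g2) => v /=; rewrite ?e2K ?g1K ?e1K ?g2K.
move=> v; have [p ->] : exists p, v = e1 p by exists (g1 v); rewrite g1K.
by rewrite /= hE1 hF1 hH1 !e1K hE2 hF2 hH2.
Qed.

Section Whittaker.
Variables (C : fieldType) (f u : {poly C}) (V : lmodType C) (E F H : {linear V -> V}).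
Variables (eta xi : C) (w : V).
Hypothesis C_char0 : [pchar C] =i pred0.
Hypotheses (RmodV : is_Rmodule f E F H) (irrV : irreducible E F H).
Hypothesis casimirV : forall v, act E F H (casimir u) v = xi *: v.
Hypotheses (eta0 : eta != 0) (w0 : w != 0) (whittaker_w : whittaker E eta w).

Lemma F_whittaker : F w = peval (eta^-1 *: (xi%:P - u)) H w.
Proof.
rewrite pevalZ pevalB pevalC -(casimirV w) act_casimir whittaker_w linearZ /=.
by rewrite addrK scalerA mulVf // scale1r.
Qed.

Lemma E_orbit p : E (orbit_map H w p) = orbit_map H w (eta *: (p \Po ('X + (-1)%:P))).
Proof. by rewrite /orbit_map (E_peval RmodV) whittaker_w pevalvZ pevalZ. Qed.

Lemma F_orbit p :
  F (orbit_map H w p) = orbit_map H w ((p \Po ('X + 1%:P)) * (eta^-1 *: (xi%:P - u))).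
Proof. by rewrite /orbit_map (F_peval RmodV) F_whittaker pevalM. Qed.

Lemma H_orbit p : H (orbit_map H w p) = orbit_map H w (p * 'X).
Proof. by rewrite /orbit_map pevalMX peval_comm. Qed.

Lemma orbit_map_surj v : exists p, orbit_map H w p = v.
Proof.
case: irrV => _ /(_ (fun v => exists p, orbit_map H w p = v)) [].
- by exists 0; rewrite linear0.
- by move=> _ _ [p <-] [q <-]; exists (p + q); rewrite linearD.
- by move=> c _ [p <-]; exists (c *: p); rewrite linearZ.
- by move=> _ [p <-]; rewrite E_orbit F_orbit H_orbit; split; [|split]; eexists.
- move=> /(_ w) w_eq0; case/eqP: w0; apply: w_eq0.
  by exists 1; rewrite /orbit_map pevalC scale1r.
- exact.
Qed.

Let N1_neq0 : (-1 : C) != 0. Proof. by rewrite oppr_eq0 oner_eq0. Qed.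

Lemma orbit_map_eq0 p : orbit_map H w p = 0 -> p = 0.
Proof.
elim: {p}(size p) {-2}p (leqnn (size p)) => [|n IHn] p le_p p_w.
  by apply/eqP; rewrite -size_poly_eq0 -leqn0.
have delta_w : orbit_map H w (delta (-1) p) = 0.
  have := congr1 E p_w; rewrite E_orbit linear0 linearZ /= => /eqP.
  by rewrite scaler_eq0 (negbTE eta0) linearB /= p_w => /eqP ->; rewrite subrr.
have size_delta_p : (size (delta (-1) p) <= n)%N.
  by rewrite (leq_trans (size_delta _ _)) //; case: (size p) le_p.
move: (IHn _ size_delta_p delta_w) => /(delta_eq0 C_char0 N1_neq0) /size1_polyC p_const.
move: p_w; rewrite p_const /orbit_map pevalC => /eqP.
by rewrite scaler_eq0 (negbTE w0) orbF => /eqP ->.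
Qed.

Lemma orbit_map_inj : injective (orbit_map H w).
Proof. exact: raddf_inj orbit_map_eq0. Qed.

Lemma orbit_map_bij : bijective (orbit_map H w).
Proof.
have surj v : exists p, orbit_map H w p == v by have [p <-] := orbit_map_surj v; exists p.
exists (fun v => xchoose (surj v)) => [p|v]; last exact/eqP/(xchooseP (surj v)).
by apply: orbit_map_inj; apply/eqP/(xchooseP (surj _)).
Qed.

Lemma whittaker_unique w' : whittaker E eta w' -> exists c, w' = c *: w.
Proof.
have [p <-] := orbit_map_surj w'; rewrite /whittaker E_orbit -[RHS]linearZ.
move=> /orbit_map_inj /(scalerI eta0) /eqP; rewrite eq_sym -subr_eq0 => /eqP.
move=> /(delta_eq0 C_char0 N1_neq0) /size1_polyC ->.
by exists p`_0; rewrite /orbit_map pevalC.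
Qed.

End Whittaker.

Theorem mainTheorem8 (R : realType) (f : {poly R[i]}) (etaE : R[i])
  (V1 : lmodType R[i]) (E1 F1 H1 : {linear V1 -> V1})
  (V2 : lmodType R[i]) (E2 F2 H2 : {linear V2 -> V2}) :
  etaE != 0 ->
  is_Rmodule f E1 F1 H1 -> is_Rmodule f E2 F2 H2 ->
  irreducible E1 F1 H1 -> irreducible E2 F2 H2 ->
  (exists xi : Rterm R[i] -> R[i], center_char f xi /\
     forall z, central f z ->
       (forall v, act E1 F1 H1 z v = xi z *: v) /\
       (forall v, act E2 F2 H2 z v = xi z *: v)) ->
  (exists w1 : V1, w1 != 0 /\ whittaker E1 etaE w1) ->
  (exists w2 : V2, w2 != 0 /\ whittaker E2 etaE w2) ->
  [/\ (forall w w' : V1, w != 0 -> whittaker E1 etaE w -> whittaker E1 etaE w' ->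
         exists c : R[i], w' = c *: w),
      (forall w w' : V2, w != 0 -> whittaker E2 etaE w -> whittaker E2 etaE w' ->
         exists c : R[i], w' = c *: w) &
      Rmod_iso E1 F1 H1 E2 F2 H2].
Proof.
move=> eta0 RmodV1 RmodV2 irrV1 irrV2 [xi [_ xi_central]].
move=> [w1 [w1_neq0 w1_whitt]] [w2 [w2_neq0 w2_whitt]].
have char0 := @pchar_num R[i].
have [u /casimir_central casimir_u] := delta_surj char0 f.
have [casimirV1 casimirV2] := xi_central _ casimir_u.
split.
- move=> w w' w_neq0 w_whitt.
  exact: whittaker_unique char0 RmodV1 irrV1 casimirV1 eta0 w_neq0 w_whitt w'.
- move=> w w' w_neq0 w_whitt.
  exact: whittaker_unique char0 RmodV2 irrV2 casimirV2 eta0 w_neq0 w_whitt w'.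
have bij1 := orbit_map_bij char0 RmodV1 irrV1 casimirV1 eta0 w1_neq0 w1_whitt.
have bij2 := orbit_map_bij char0 RmodV2 irrV2 casimirV2 eta0 w2_neq0 w2_whitt.
apply: (Rmod_iso_transport bij1 bij2).
- exact: E_orbit RmodV1 w1_whitt.
- exact: E_orbit RmodV2 w2_whitt.
- exact: F_orbit RmodV1 casimirV1 eta0 w1_whitt.
- exact: F_orbit RmodV2 casimirV2 eta0 w2_whitt.
- exact: H_orbit.
- exact: H_orbit.
Qed.
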